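(* Let $N_3(t)=\mathbb{E}[Z_3(t)]$ be the expected number of vertices of degree $3$ in a Random Apollonian Network after $t$ steps. Then for all $t\ge 1$, $$\Big|N_3(t) - \frac{2}{5} t\Big|\leq K, \quad\text{where } K=3.6.$$
   Context: A Random Apollonian Network (RAN) is generated as follows: start (at time $t=0$) with a single triangular face. At each step $t=1,2,\dots$, pick one of the current (bounded) triangular faces uniformly at random, insert a new vertex inside it, and connect it to the three vertices on the boundary of that face, subdividing the face into three new triangular faces. After $t$ steps there are $2t+1$ triangular faces. $Z_k(t)$ denotes the number of vertices of degree exactly $k$ after $t$ steps. *)

(* Random Apollonian Network as a deterministic function of
   the sequence of face choices; expectation = average over uniform choices. *)
From mathcomp Require Import all_boot all_order all_algebra.
Set Implicit Arguments. Unset Strict Implicit. Unset Printing Implicit Defensive.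
Import Order.TTheory GRing.Theory Num.Theory.

(* A planar triangulation state: number of vertices (labelled 0..nv-1),
   list of (undirected) edges, list of bounded triangular faces. *)
Record ran_state := RanState {
  nverts : nat;
  edges : seq (nat * nat);
  faces : seq (nat * nat * nat)
}.

Definition ran_init : ran_state :=
  RanState 3 [:: (0, 1); (1, 2); (0, 2)] [:: (0, 1, 2)].

Definition ran_step (s : ran_state) (i : nat) : ran_state :=
  let: (a, b, c) := nth (0, 0, 0) (faces s) i in
  let v := nverts s in
  RanState v.+1
    ([:: (a, v); (b, v); (c, v)] ++ edges s)
    (set_nth (0, 0, 0) (faces s) i (a, b, v) ++ [:: (b, c, v); (a, c, v)]).

Definition degree (s : ran_state) (x : nat) : nat :=
  count (fun e : nat * nat => (e.1 == x) || (e.2 == x)) (edges s).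

Definition Zk (k : nat) (s : ran_state) : nat :=
  count (fun x => degree s x == k) (iota 0 (nverts s)).

Fixpoint expZk (k t : nat) (s : ran_state) : rat :=
  match t with
  | 0 => (Zk k s)%:R
  | t'.+1 => ((\sum_(i < size (faces s)) expZk k t' (ran_step s i))
              / (size (faces s))%:R)%R
  end.

Definition N (k t : nat) : rat := expZk k t ran_init.

From mathcomp Require Import all_boot all_order all_algebra.
From mathcomp Require Import zify ring lra.
Set Implicit Arguments.
Unset Strict Implicit.
Unset Printing Implicit Defensive.
Import Order.TTheory GRing.Theory Num.Theory.

(* In a triangulation the degree of an inner vertex equals the number of faces
   containing it, and every vertex is created with degree 3.  Let I count the
   inner vertices of degree 3.  Each of them lies on exactly 3 of the n = 2t+1
   faces and leaves I when one of those faces is chosen, while the new vertex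
   joins I; hence E[I(t+1)] = (1 - 3/(2t+1)) E[I(t)] + 1, whose solution is
   E[I(1)] = 1 and E[I(t)] = (2t+1)/5 for t >= 2.  The three outer vertices
   account for the remaining error: I <= Z_3 <= I + 3. *)

Definition corner_count (x : nat) (f : nat * nat * nat) : nat :=
  ((f.1.1 == x) + (f.1.2 == x) + (f.2 == x))%N.

Definition face_degree (s : ran_state) (x : nat) : nat :=
  \sum_(f <- faces s) corner_count x f.

Definition face_wf (nv : nat) (f : nat * nat * nat) : bool :=
  [&& f.1.1 != f.1.2, f.1.2 != f.2, f.1.1 != f.2,
      f.1.1 < nv, f.1.2 < nv & f.2 < nv].

Definition edge_wf (nv : nat) (e : nat * nat) : bool := (e.1 < nv) && (e.2 < nv).

Definition ran_wf (s : ran_state) : Prop :=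
  [/\ 3 <= nverts s, all (face_wf (nverts s)) (faces s),
      all (edge_wf (nverts s)) (edges s)
    & forall x, 3 <= x < nverts s ->
        degree s x = face_degree s x /\ 3 <= degree s x].

Lemma corner_count_le1 nv f x : face_wf nv f -> corner_count x f <= 1.
Proof. by case: f => [[a b] c] /and4P [/= Hab Hbc Hac _]; rewrite /corner_count /=; lia. Qed.

Lemma face_wfS nv f : face_wf nv f -> face_wf nv.+1 f.
Proof.
case: f => [[a b] c]; rewrite /face_wf /= => /and4P [-> -> -> /and3P [? ? ?]].
by apply/and3P; split; lia.
Qed.

Lemma face_degree_fresh s x :
  all (face_wf (nverts s)) (faces s) -> nverts s <= x -> face_degree s x = 0.
Proof.
move=> /allP wf_s Hx; rewrite /face_degree big_seq big1 // => -[[a b] c].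
move=> /wf_s /and4P [_ _ _ /and3P /= [? ? ?]]; rewrite /corner_count /=; lia.
Qed.

Lemma degree_fresh s x :
  all (edge_wf (nverts s)) (edges s) -> nverts s <= x -> degree s x = 0.
Proof.
move=> /allP wf_s Hx; apply/eqP; rewrite -leqn0 leqNgt -has_count.
by apply/hasP => -[e /wf_s /andP [? ?] /orP [] /eqP]; lia.
Qed.

Lemma nth_face_wf s i : ran_wf s -> i < size (faces s) ->
  exists a b c, nth (0, 0, 0) (faces s) i = (a, b, c) /\
    face_wf (nverts s) (a, b, c).
Proof.
case=> _ /allP wf_faces _ _ Hi.
case Ei: (nth (0, 0, 0) (faces s) i) => [[a b] c].
by exists a, b, c; split=> //; rewrite -Ei; apply/wf_faces/mem_nth.
Qed.

Section Step.
Variables (s : ran_state) (i a b c : nat).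
Hypothesis Hi : i < size (faces s).
Hypothesis Hface : nth (0, 0, 0) (faces s) i = (a, b, c).
Hypothesis Hwf : face_wf (nverts s) (a, b, c).

Lemma nverts_step : nverts (ran_step s i) = (nverts s).+1.
Proof. by rewrite /ran_step Hface. Qed.

Lemma size_faces_step : size (faces (ran_step s i)) = (size (faces s)).+2.
Proof. by rewrite /ran_step Hface /= size_cat size_set_nth (maxn_idPr Hi) /= addn2. Qed.

Lemma faces_step : faces (ran_step s i) =
  take i (faces s) ++ (a, b, nverts s) :: drop i.+1 (faces s)
  ++ [:: (b, c, nverts s); (a, c, nverts s)].
Proof. by rewrite /ran_step Hface /= set_nthE Hi -catA. Qed.

Lemma degree_step x : degree (ran_step s i) x =
  (corner_count x (a, b, c) + 3 * (nverts s == x) + degree s x)%N.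
Proof. by move: Hwf; rewrite /degree /ran_step Hface /corner_count /face_wf /=; lia. Qed.

Lemma face_degree_step x : face_degree (ran_step s i) x =
  (corner_count x (a, b, c) + 3 * (nverts s == x) + face_degree s x)%N.
Proof.
have faces_s : faces s = take i (faces s) ++ (a, b, c) :: drop i.+1 (faces s).
  by rewrite -Hface -drop_nth // cat_take_drop.
rewrite /face_degree [in RHS]faces_s faces_step !big_cat !big_cons /=.
by move: Hwf; rewrite big_cat !big_cons big_nil /corner_count /face_wf /=; lia.
Qed.

End Step.

Lemma ran_wf_init : ran_wf ran_init.
Proof. by split=> // x /=; lia. Qed.

Lemma ran_wf_step s i : ran_wf s -> i < size (faces s) -> ran_wf (ran_step s i).
Proof.
move=> wf_s Hi; have [a [b [c [Hface Hwf]]]] := nth_face_wf wf_s Hi.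
have [nv3 /allP wf_faces /allP wf_edges deg_inner] := wf_s.
have /and4P [/= ? ? ? /and3P [? ? ?]] := Hwf.
split; rewrite (nverts_step Hface).
- lia.
- rewrite (faces_step Hi Hface) all_cat /= all_cat /= andbT.
  apply/and5P; split; try by rewrite /face_wf /=; lia.
  + by apply/allP => f /mem_take /wf_faces /face_wfS.
  + by apply/allP => f /mem_drop /wf_faces /face_wfS.
- rewrite /ran_step Hface /=; apply/and4P; split; try by rewrite /edge_wf /=; lia.
  by apply/allP => e /wf_edges /andP [? ?]; apply/andP; split; lia.
- move=> x Hx; rewrite (degree_step Hi Hface Hwf) (face_degree_step Hi Hface Hwf).
  have [Hxv | Hxv] := ltnP x (nverts s).
    have /deg_inner [-> ?] : 3 <= x < nverts s by lia.
    by split=> //; lia.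
  have -> : x = nverts s by lia.
  rewrite degree_fresh ?face_degree_fresh //; try exact/allP.
  by rewrite /corner_count /= eqxx; lia.
Qed.

Inductive reachable : nat -> ran_state -> Prop :=
  | reachable0 : reachable 0 ran_init
  | reachableS t s i :
      reachable t s -> i < size (faces s) -> reachable t.+1 (ran_step s i).

Lemma reachable_wf t s : reachable t s -> ran_wf s /\ size (faces s) = (2 * t).+1.
Proof.
elim=> [|{}t {}s i _ [wf_s size_s] Hi]; first by split=> //; exact: ran_wf_init.
have [a [b [c [Hface Hwf]]]] := nth_face_wf wf_s Hi.
by split; [exact: ran_wf_step | rewrite (size_faces_step Hi Hface) size_s; lia].
Qed.

Definition inner_deg3 (s : ran_state) : nat :=
  \sum_(3 <= x < nverts s) (degree s x == 3 : nat).

Lemma inner_deg3_step s i : ran_wf s -> i < size (faces s) ->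
  inner_deg3 (ran_step s i) =
  (\sum_(3 <= x < nverts s)
     (corner_count x (nth (0, 0, 0) (faces s) i) + degree s x == 3 : nat)).+1.
Proof.
move=> wf_s Hi; have [a [b [c [Hface Hwf]]]] := nth_face_wf wf_s Hi.
have [nv3 _ /allP wf_edges _] := wf_s.
have /and4P [/= _ _ _ /and3P [? ? ?]] := Hwf.
rewrite /inner_deg3 (nverts_step Hface) big_nat_recr //= Hface -[RHS]addn1.
congr (_ + _)%N.
  apply: eq_big_nat => x Hx; rewrite (degree_step Hi Hface Hwf).
  have -> : (nverts s == x) = false by apply/eqP; lia.
  by rewrite muln0 addn0.
rewrite (degree_step Hi Hface Hwf) eqxx degree_fresh //; last exact/allP.
by rewrite /corner_count /=; lia.
Qed.

Lemma sum_inner_deg3_step s (n := size (faces s)) : ran_wf s ->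
  (\sum_(i < n) inner_deg3 (ran_step s i) + 3 * inner_deg3 s =
   n * inner_deg3 s + n)%N.
Proof.
move=> wf_s; have [_ /allP wf_faces _ deg_inner] := wf_s.
set cc := fun x (i : 'I_n) => corner_count x (nth (0, 0, 0) (faces s) i).
rewrite (eq_bigr _ (fun i _ => inner_deg3_step wf_s (ltn_ord i))).
under eq_bigr do rewrite -addn1.
rewrite big_split /= sum_nat_const card_ord muln1 exchange_big /=.
rewrite /inner_deg3 big_distrr /= addnAC -big_split /=; congr (_ + _)%N.
rewrite big_distrr /=; apply: eq_big_nat => x Hx.
have [deg_faces deg_ge3] := deg_inner x Hx.
have cc_le1 i : (cc x i <= 1)%N by apply/corner_count_le1/wf_faces/mem_nth.
have sum_cc : (\sum_(i < n) cc x i)%N = degree s x.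
  by rewrite deg_faces /face_degree (big_nth (0, 0, 0)) big_mkord.
have [Hd | Hd | Hd] := ltngtP (degree s x) 3; first lia.
  by rewrite big1 ?muln0 // => i _; apply/eqP; rewrite eqb0; apply/eqP; lia.
(* a degree-3 vertex stays so exactly when the chosen face avoids it *)
have : (\sum_(i < n) ((cc x i + 3 == 3 : nat) + cc x i))%N = n.
  by rewrite -[RHS]card_ord -sum1_card; apply: eq_bigr => i _; have := cc_le1 i; lia.
by rewrite big_split /= sum_cc Hd !muln1.
Qed.

Lemma inner_deg3_Z3 s : 3 <= nverts s ->
  inner_deg3 s <= Zk 3 s <= inner_deg3 s + 3.
Proof.
move=> nv3; have -> : Zk 3 s =
    (count (fun x => degree s x == 3) (iota 0 3) + inner_deg3 s)%N.
  rewrite /Zk /inner_deg3 -(subnKC nv3) iotaD count_cat; congr (_ + _)%N.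
  by rewrite -sumn_count sumnE big_map /index_iota addKn.
by have := count_size (fun x => degree s x == 3) (iota 0 3); rewrite size_iota; lia.
Qed.

Local Open Scope ring_scope.

Definition step_mean (f : ran_state -> rat) (s : ran_state) : rat :=
  (\sum_(i < size (faces s)) f (ran_step s i)) / (size (faces s))%:R.

Fixpoint expect (f : ran_state -> rat) (t : nat) (s : ran_state) : rat :=
  if t is t'.+1 then step_mean (expect f t') s else f s.

Lemma expZkE k t s : expZk k t s = expect (fun s => (Zk k s)%:R) t s.
Proof.
elim: t s => [//|t IH] s /=; rewrite /step_mean.
by congr (_ / _); apply: eq_bigr => i _; rewrite IH.
Qed.

Lemma expectSr f t s : expect f t.+1 s = expect (step_mean f) t s.
Proof.
elim: t s => [//|t IH] s /=; rewrite /step_mean.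
by congr (_ / _); apply: eq_bigr => i _; rewrite -IH.
Qed.

Section ExpectReachable.
Variables (t0 : nat) (s0 : ran_state).
Hypothesis reach_s0 : reachable t0 s0.

Lemma ler_expect f g t :
  (forall s, reachable (t0 + t) s -> f s <= g s) ->
  expect f t s0 <= expect g t s0.
Proof.
elim: t t0 s0 reach_s0 => [|t IH] t1 s1 reach_s1 le_fg /=.
  by apply: le_fg; rewrite addn0.
apply: ler_wpM2r; first by rewrite invr_ge0 ler0n.
apply: ler_sum => i _; apply: (IH t1.+1); first exact: reachableS.
by move=> s; rewrite addSnnS; apply: le_fg.
Qed.

Lemma eq_expect f g t :
  (forall s, reachable (t0 + t) s -> f s = g s) ->
  expect f t s0 = expect g t s0.
Proof.
by move=> eq_fg; apply/le_anti/andP; split; apply: ler_expect => s /eq_fg ->.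
Qed.

Lemma expect_affine a b f t :
  expect (fun s => a * f s + b) t s0 = a * expect f t s0 + b.
Proof.
elim: t t0 s0 reach_s0 => [//|t IH] t1 s1 reach_s1 /=.
rewrite /step_mean (eq_bigr _ (fun i _ => IH _ _ (reachableS reach_s1 (ltn_ord i)))).
rewrite big_split /= -mulr_sumr sumr_const card_ord -mulr_natr.
have [_ ->] := reachable_wf reach_s1.
have t1_ge0 : 0 <= t1%:R :> rat by [].
by field; apply: lt0r_neq0; lra.
Qed.

End ExpectReachable.

Lemma step_mean_inner_deg3 s (n := size (faces s)) : ran_wf s -> (0 < n)%N ->
  step_mean (fun s => (inner_deg3 s)%:R) s =
  (1 - 3 / n%:R) * (inner_deg3 s)%:R + 1.
Proof.
move=> wf_s n_gt0; move: (sum_inner_deg3_step wf_s).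
move/(congr1 (fun m : nat => m%:R : rat)); rewrite !natrD !natrM natr_sum.
rewrite /step_mean -/n => sum_eq.
have -> : \sum_(i < n) ((inner_deg3 (ran_step s i))%:R : rat) =
    n%:R * (inner_deg3 s)%:R + n%:R - 3%:R * (inner_deg3 s)%:R.
  by rewrite -sum_eq; ring.
by field; rewrite pnatr_eq0 -lt0n.
Qed.

Definition mean_inner_deg3 (t : nat) : rat :=
  expect (fun s => (inner_deg3 s)%:R) t ran_init.

Lemma mean_inner_deg3S t : mean_inner_deg3 t.+1 =
  (1 - 3 / (2 * t).+1%:R) * mean_inner_deg3 t + 1.
Proof.
rewrite /mean_inner_deg3 expectSr -(expect_affine reachable0).
apply: (eq_expect reachable0) => s /reachable_wf [wf_s size_s].
by rewrite step_mean_inner_deg3 // size_s add0n.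
Qed.

Lemma mean_inner_deg3_1 : mean_inner_deg3 1 = 1.
Proof.
by rewrite mean_inner_deg3S /mean_inner_deg3 /= /inner_deg3 big_geq // mulr0 add0r.
Qed.

Lemma mean_inner_deg3_closed t : (2 <= t)%N ->
  mean_inner_deg3 t = (2 * t%:R + 1) / 5.
Proof.
case: t => [//|[//|t]] _; elim: t => [|t IH].
  by rewrite mean_inner_deg3S mean_inner_deg3_1; field.
rewrite mean_inner_deg3S IH -[(2 * t.+2).+1]addn1 natrD natrM -!natr1.
have t_ge0 : 0 <= t%:R :> rat by [].
by field; apply: lt0r_neq0; lra.
Qed.

Theorem mainTheorem2 (t : nat) : (1 <= t)%N ->
  `| N 3 t - (2%:R / 5%:R) * t%:R | <= 36%:R / 10%:R :> rat.
Proof.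
move=> t_ge1.
have N3_ge : mean_inner_deg3 t <= N 3 t.
  rewrite /N expZkE; apply: (ler_expect reachable0) => s.
  by move=> /reachable_wf [[nv3 _ _ _] _]; rewrite ler_nat; case/andP: (inner_deg3_Z3 nv3).
have N3_le : N 3 t <= mean_inner_deg3 t + 3.
  rewrite /N expZkE /mean_inner_deg3 -[X in _ <= X + _]mul1r.
  rewrite -(expect_affine reachable0); apply: (ler_expect reachable0) => s.
  move=> /reachable_wf [[nv3 _ _ _] _]; rewrite mul1r -(natrD _ _ 3) ler_nat.
  by case/andP: (inner_deg3_Z3 nv3).
rewrite ler_norml; move: N3_ge N3_le; have [t_lt2 | t_ge2] := ltnP t 2.
  have -> : t = 1%N by lia.
  by rewrite mean_inner_deg3_1 => *; apply/andP; split; lra.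
by rewrite mean_inner_deg3_closed // => *; apply/andP; split; lra.
Qed.
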